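(* Consider the stochastic quadratic problem in the context, and let $\eta_0,\dots,\eta_T$ be any deterministic learning rates. Run SGD $w_{t+1}=w_t-\eta_t(H(\xi_t)w_t-b(\xi_t))$ for $t=0,\dots,T$ from a deterministic $w_0$. Assume $\mathbb{E}_\xi[n_tn_t^\top]\preceq\sigma^2H$ for all $t$, and let $P_t=I-\eta_tH$. Let $\lambda_1,\dots,\lambda_d$ be the eigenvalues of $H$. Then $$\sum_{\tau=0}^T\mathbb{E}\left[\eta_\tau^2\,n_\tau^\top P_T\cdots P_{\tau+1}HP_{\tau+1}\cdots P_T\,n_\tau\right]\le\sigma^2\sum_{j=1}^d\lambda_j^2\sum_{k=0}^T\eta_k^2\prod_{i=k+1}^T(1-\eta_i\lambda_j)^2 .$$
   Context: Let $\xi$ be a random data sample, $H(\xi)\in\mathbb{R}^{d\times d}$ a random symmetric matrix and $b(\xi)\in\mathbb{R}^d$ a random vector. Define $f(w,\xi)=\frac12w^\top H(\xi)w-b(\xi)^\top w$. Set $H=\mathbb{E}H(\xi)$, assumed positive definite, and $b=\mathbb{E}b(\xi)$, with $w_*=H^{-1}b$. The samples $\xi_t$ are i.i.d. copies of $\xi$, and $n_t=(Hw_t-b)-(H(\xi_t)w_t-b(\xi_t))$. *)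

From HB Require Import structures.
From mathcomp Require Import all_boot all_order all_algebra.
From mathcomp Require Import all_classical all_reals all_analysis.
Set Implicit Arguments. Unset Strict Implicit. Unset Printing Implicit Defensive.
Import Order.TTheory GRing.Theory Num.Theory.
Local Open Scope ring_scope.

Section Defs.
Context {R : realType} {dX : measure_display} {X : measurableType dX}.

(* Expectation over i.i.d. samples (xi_0, ..., xi_{N-1}) ~ mu^{N}, of a
   nonnegative (extended-real valued) function of the sample list:
   iterated integral  \int mu(dxi_0) ... \int mu(dxi_{N-1}) f [:: xi_0; ...; xi_{N-1}]. *)
Fixpoint iid_expect (mu : {measure set X -> \bar R}) (N : nat)
    (f : seq X -> \bar R) : \bar R :=
  match N with
  | 0 => f [::]
  | N'.+1 => (\int[mu]_x iid_expect mu N' (fun l => f (x :: l)))%E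
  end.

Fixpoint sgd (d : nat) (Hx : X -> 'M[R]_d) (bx : X -> 'cV[R]_d)
    (eta : nat -> R) (t : nat) (w : 'cV[R]_d) (l : seq X) : 'cV[R]_d :=
  match l with
  | [::] => w
  | x :: l' => sgd Hx bx eta t.+1 (w - eta t *: (Hx x *m w - bx x)) l'
  end.

Definition noise (d : nat) (Hx : X -> 'M[R]_d) (bx : X -> 'cV[R]_d)
    (H : 'M[R]_d) (b : 'cV[R]_d) (w : 'cV[R]_d) (x : X) : 'cV[R]_d :=
  (H *m w - b) - (Hx x *m w - bx x).

End Defs.

Definition mxprod {R : pzRingType} (d : nat) (F : nat -> 'M[R]_d) (l : seq nat)
  : 'M[R]_d := foldr (fun i A => F i *m A) 1%:M l.

Definition posdef {R : realType} (d : nat) (A : 'M[R]_d) : Prop :=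
  forall v : 'cV[R]_d, v != 0 -> 0 < (v^T *m A *m v) 0 0.

From HB Require Import structures.
From mathcomp Require Import all_boot all_order all_algebra.
From mathcomp Require Import all_classical all_reals all_analysis measurable_realfun.
From mathcomp Require Import ring lra.
Set Implicit Arguments. Unset Strict Implicit. Unset Printing Implicit Defensive.
Import Order.TTheory GRing.Theory Num.Theory.
Local Open Scope ring_scope.

(* Write H = Q^T diag(m) Q with Q orthogonal; this is the spectral theorem for a
   symmetric real matrix with split characteristic polynomial, proved by deflating
   one eigenvector at a time with a Householder reflection.  Every P_i is then
   Q^T diag(1 - eta_i m_k) Q, so the middle matrix of the tau-th term is Q^T diag(g) Q
   with g_k = m_k prod_i (1 - eta_i m_k)^2 >= 0, and its quadratic form in n is
   sum_k g_k ((row k Q) n)^2.  The tau-th term only depends on the first tau + 1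
   samples; integrating out the sample xi_tau with the covariance bound at
   v = (row k Q)^T gives E ((row k Q) n)^2 <= sigma^2 m_k.  Summing over tau and
   using that the m_k are the lambda_j up to a permutation yields the bound. *)

Section Householder.
Variable R : realFieldType.

Lemma mulmx_trmx_row_gt0 n (v : 'rV[R]_n) : v != 0 -> 0 < (v *m v^T) 0 0.
Proof.
move=> vN0; have [j vj] : exists j, v 0 j != 0.
  apply/existsP; apply: contraR vN0 => /existsPn v0; apply/eqP/rowP => j.
  by rewrite mxE; apply/eqP; move: (v0 j); rewrite negbK.
have -> : (v *m v^T) 0 0 = \sum_i v 0 i ^+ 2.
  by rewrite mxE; apply: eq_bigr => i _; rewrite mxE expr2.
rewrite (bigD1 j) //= ltr_pwDl ?exprn_even_gt0 //.
by apply: sumr_ge0 => i _; exact: sqr_ge0.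
Qed.

Lemma delta0_mul_trmx n (x : 'rV[R]_n.+1) : 'e_0 *m x^T = (x 0 0)%:M.
Proof. by rewrite -rowE; apply/matrixP => i j; rewrite !ord1 !mxE. Qed.

Lemma rank1_mx_sqr m (w : 'rV[R]_m) :
  (w^T *m w) *m (w^T *m w) = (w *m w^T) 0 0 *: (w^T *m w).
Proof.
rewrite mulmxA -[w^T *m w *m w^T]mulmxA {1}[w *m _]mx11_scalar.
by rewrite mul_mx_scalar scalemxAl.
Qed.

Lemma householder_reflection n (u : 'rV[R]_n.+1) : u *m u^T = 1%:M ->
  exists S : 'M[R]_n.+1, [/\ S^T = S, S *m S = 1%:M & 'e_0 *m S = u].
Proof.
move=> uu; have [->|uNe0] := eqVneq u 'e_0.
  by exists 1%:M; split; rewrite ?trmx1 ?mulmx1.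
set w := 'e_0 - u.
have ww : w *m w^T = (2 * w 0 0)%:M.
  rewrite /w linearB /= mulmxBl !mulmxBr !delta0_mul_trmx uu.
  rewrite -[u *m _]trmxK trmx_mul trmxK delta0_mul_trmx tr_scalar_mx.
  by apply/matrixP => i j; rewrite !ord1 !mxE /= !mulr1n; lra.
have w00 : 0 < w 0 0.
  have := @mulmx_trmx_row_gt0 _ w; rewrite ww mxE mulr1n pmulr_rgt0 //.
  by apply; rewrite subr_eq0 eq_sym.
have w0N0 : w 0 0 != 0 by rewrite gt_eqF.
(* Since |w|^2 = 2 w_0, this is the reflection along w, which swaps e_0 and u. *)
exists (1%:M - (w 0 0)^-1 *: (w^T *m w)); split.
- by rewrite linearB /= linearZ /= trmx1 trmx_mul trmxK.
- have := rank1_mx_sqr w; rewrite ww mxE eqxx mulr1n; move: (w^T *m w) => W WW.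
  rewrite mulmxBl !mulmxBr mul1mx mulmx1 -!scalemxAl -!scalemxAr scalerA WW scalerA.
  have -> : (w 0 0)^-1 * (w 0 0)^-1 * (2 * w 0 0) = (w 0 0)^-1 + (w 0 0)^-1.
    by field.
  by rewrite scalerDl mul1mx; apply/matrixP => i j; rewrite !mxE; ring.
- rewrite mulmxBr mulmx1 -scalemxAr mulmxA delta0_mul_trmx mul_scalar_mx scalerA.
  by rewrite mulVf // scale1r /w opprB addrC subrK.
Qed.

End Householder.

Section BlockConj.
Variable R : comNzRingType.

Lemma char_poly_orthogonal_conj n (Q A : 'M[R]_n) : Q *m Q^T = 1%:M ->
  char_poly (Q^T *m A *m Q) = char_poly A.
Proof.
move=> QQT; have QTQ : Q^T *m Q = 1%:M by apply: mulmx1C.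
rewrite /char_poly /char_poly_mx.
have -> : 'X%:M - map_mx polyC (Q^T *m A *m Q) =
    map_mx polyC Q^T *m ('X%:M - map_mx polyC A) *m map_mx polyC Q.
  rewrite mulmxBr mulmxBl !map_mxM mul_mx_scalar -scalemxAl -map_mxM.
  by rewrite -[X in 'X *: X]map_mxM QTQ map_mx1 scalemx1.
by rewrite !det_mulmx mulrC mulrA -det_mulmx -map_mxM QQT map_mx1 det1 mul1r.
Qed.

Lemma char_poly_block_scalar n (a : R) (A : 'M[R]_n) :
  char_poly (block_mx (a%:M : 'M[R]_1) 0 0 A) = ('X - a%:P) * char_poly A.
Proof.
rewrite /char_poly /char_poly_mx map_block_mx (scalar_mx_block 1 n) map_scalar_mx /=.
rewrite !map_mx0 opp_block_mx add_block_mx !subr0 det_ublock.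
by rewrite det_mx11 !mxE /= !mulr1n.
Qed.

Lemma symmetric_first_row_block n (B : 'M[R]_n.+1) (a : R) :
  B^T = B -> 'e_0 *m B = a *: ('e_0 : 'rV_n.+1) ->
  B = block_mx (a%:M : 'M[R]_1) 0 0 (drsubmx (B : 'M[R]_(1 + n))).
Proof.
move=> BT e0B.
have row0 i j : val i = 0%N -> B i j = a * (val j == 0%N)%:R.
  move=> /eqP i0; have -> : i = 0 by apply/val_inj/eqP.
  have := congr1 (fun M : 'rV_n.+1 => M 0 j) e0B; rewrite /= -rowE !mxE => ->.
  by rewrite eqxx.
have ul : ulsubmx (B : 'M[R]_(1 + n)) = a%:M.
  by apply/matrixP => i j; rewrite !ord1 !mxE row0 ?mulr1 //.
have ur : ursubmx (B : 'M[R]_(1 + n)) = 0.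
  by apply/matrixP => i j; rewrite !ord1 !mxE row0 ?mulr0.
have dl : dlsubmx (B : 'M[R]_(1 + n)) = 0.
  by apply/matrixP => i j; rewrite !ord1 !mxE -BT mxE row0 ?mulr0.
by rewrite -ul -ur -dl submxK.
Qed.

End BlockConj.

Section Spectral.
Variable R : rcfType.

Lemma symmetric_deflation n (H : 'M[R]_n.+1) (a : R) : H^T = H -> eigenvalue H a ->
  exists (S : 'M[R]_n.+1) (H' : 'M[R]_n),
    [/\ S^T = S, S *m S = 1%:M, H'^T = H'
       & H = S *m block_mx (a%:M : 'M[R]_1) 0 0 H' *m S].
Proof.
move=> HT /eigenvalueP [v vH vN0].
have vv_gt0 := mulmx_trmx_row_gt0 vN0.
set k := Num.sqrt ((v *m v^T) 0 0).
have k_gt0 : 0 < k by rewrite sqrtr_gt0.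
have uu : (k^-1 *: v) *m (k^-1 *: v)^T = 1%:M.
  rewrite linearZ /= -scalemxAl -scalemxAr scalerA [v *m _]mx11_scalar scale_scalar_mx.
  by rewrite -(sqr_sqrtr (ltW vv_gt0)) -/k; congr (_%:M); field; rewrite gt_eqF.
have [S [ST SS e0S]] := householder_reflection uu.
pose B := S *m H *m S.
have BT : B^T = B by rewrite /B !trmx_mul ST HT mulmxA.
have e0B : 'e_0 *m B = a *: ('e_0 : 'rV_n.+1).
  rewrite /B !mulmxA e0S -scalemxAl vH scalerA mulrC -scalerA -e0S -scalemxAl.
  by rewrite -mulmxA SS mulmx1.
exists S, (drsubmx (B : 'M[R]_(1 + n))); split => //; first by rewrite trmx_drsub BT.
by rewrite -symmetric_first_row_block // /B !mulmxA SS mul1mx -mulmxA SS mulmx1.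
Qed.

Theorem symmetric_orthogonal_diag n (H : 'M[R]_n) (lam : 'I_n -> R) :
  H^T = H -> char_poly H = \prod_(j < n) ('X - (lam j)%:P) ->
  exists (Q : 'M[R]_n) (m : 'rV[R]_n), Q *m Q^T = 1%:M /\ H = Q^T *m diag_mx m *m Q.
Proof.
elim: n H lam => [|n IH] H lam HT charH.
  by exists 1%:M, 0; split; apply/matrixP => -[].
have : root (char_poly H) (lam 0) by rewrite charH big_ord_recl rootM root_XsubC eqxx.
rewrite -eigenvalue_root_char => /(symmetric_deflation HT) [S [H' [ST SS H'T HE]]].
have charH' : char_poly H' = \prod_(j < n) ('X - (lam (lift 0 j))%:P).
  apply: (@mulfI _ ('X - (lam 0)%:P)); first by rewrite polyXsubC_eq0.
  have -> : ('X - (lam 0)%:P) * \prod_(j < n) ('X - (lam (lift 0 j))%:P) = char_poly H.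
    by rewrite charH big_ord_recl.
  by rewrite -char_poly_block_scalar HE -{1}ST char_poly_orthogonal_conj // ST.
have [Q' [m' [QQ' H'E]]] := IH H' _ H'T charH'.
exists (block_mx (1%:M : 'M[R]_1) 0 0 Q' *m S), (row_mx (lam 0)%:M m'); split.
  rewrite trmx_mul (@tr_block_mx _ 1 n 1 n) !trmx0 trmx1 mulmxA.
  rewrite -[_ *m S *m S^T]mulmxA ST SS mulmx1 (@mulmx_block _ 1 n 1 n 1 n).
  by rewrite !mulmx1 !mul0mx !mulmx0 !addr0 !add0r QQ' -scalar_mx_block.
rewrite trmx_mul (@tr_block_mx _ 1 n 1 n) !trmx0 trmx1 ST (@diag_mx_row _ n 1).
rewrite HE H'E !mulmxA.
congr (_ *m _); rewrite -!mulmxA; congr (_ *m _).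
rewrite !(@mulmx_block _ 1 n 1 n 1 n) !mulmx1 !mul1mx !mul0mx !mulmx0 !addr0 !add0r.
have -> : diag_mx ((lam 0)%:M : 'rV[R]_1) = (lam 0)%:M.
  by apply/matrixP => i j; rewrite !ord1 !mxE.
by rewrite mulmx0.
Qed.

End Spectral.

Lemma eq_sum_of_prod_XsubC (R : fieldType) n (a b : 'I_n -> R) (F : R -> R) :
  \prod_(i < n) ('X - (a i)%:P) = \prod_(i < n) ('X - (b i)%:P) ->
  \sum_(i < n) F (a i) = \sum_(i < n) F (b i).
Proof.
move=> eq_ab.
have ab_perm :
    perm_eq [seq a i | i <- index_enum 'I_n] [seq b i | i <- index_enum 'I_n].
  by apply: prod_XsubC_eq; rewrite !big_map.
by rewrite -(big_map a xpredT F) (perm_big _ ab_perm) big_map.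
Qed.

Section OrthogonalDiag.
Variables (R : comNzRingType) (n : nat) (Q H : 'M[R]_n) (m : 'rV[R]_n).
Hypothesis QQT : Q *m Q^T = 1%:M.
Hypothesis HE : H = Q^T *m diag_mx m *m Q.

Let QTQ : Q^T *m Q = 1%:M. Proof. exact: mulmx1C. Qed.

Lemma orthogonal_conj_mul (A B : 'M[R]_n) :
  (Q^T *m A *m Q) *m (Q^T *m B *m Q) = Q^T *m (A *m B) *m Q.
Proof. by rewrite -!mulmxA (mulmxA Q) QQT mul1mx !mulmxA. Qed.

Lemma mxprod_orthogonal_diag (eta : nat -> R) (l : seq nat) :
  mxprod (fun i => 1%:M - eta i *: H) l =
  Q^T *m diag_mx (\row_k \prod_(i <- l) (1 - eta i * m 0 k)) *m Q.
Proof.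
elim: l => [|i l IH] /=.
  have -> : diag_mx (\row_k \prod_(i <- [::]) (1 - eta i * m 0 k)) = 1%:M.
    by apply/matrixP => j k; rewrite !mxE big_nil.
  by rewrite mulmx1 QTQ.
have -> : 1%:M - eta i *: H = Q^T *m diag_mx (\row_k (1 - eta i * m 0 k)) *m Q.
  have -> : diag_mx (\row_k (1 - eta i * m 0 k)) = 1%:M - eta i *: diag_mx m.
    apply/matrixP => j k; rewrite !mxE.
    by case: (j == k); rewrite ?mulr1n ?mulr0n; ring.
  by rewrite mulmxBr mulmxBl mulmx1 QTQ HE -scalemxAr -scalemxAl.
rewrite IH orthogonal_conj_mul mulmx_diag; congr (_ *m diag_mx _ *m _).
by apply/rowP => k; rewrite !mxE big_cons.
Qed.

Lemma mxprod_sandwich_orthogonal_diag (eta : nat -> R) (l : seq nat) :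
  let P i := 1%:M - eta i *: H in
  mxprod P (rev l) *m H *m mxprod P l =
  Q^T *m diag_mx (\row_k (m 0 k * (\prod_(i <- l) (1 - eta i * m 0 k)) ^+ 2)) *m Q.
Proof.
rewrite /= !mxprod_orthogonal_diag [X in _ *m X *m _]HE !orthogonal_conj_mul.
rewrite !mulmx_diag.
by congr (_ *m diag_mx _ *m _); apply/rowP => k; rewrite !mxE big_rev; ring.
Qed.

Lemma char_poly_orthogonal_diag : char_poly H = \prod_(k < n) ('X - (m 0 k)%:P).
Proof.
rewrite HE char_poly_orthogonal_conj // char_poly_trig ?diag_mx_is_trig //.
by apply: eq_bigr => k _; rewrite mxE eqxx mulr1n.
Qed.

Lemma quad_orthogonal_diag (g : 'rV[R]_n) (x : 'cV[R]_n) :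
  (x^T *m (Q^T *m diag_mx g *m Q) *m x) 0 0 =
  \sum_k g 0 k * ((row k Q *m x) 0 0) ^+ 2.
Proof.
rewrite !mulmxA -trmx_mul -mulmxA mul_mx_diag mxE.
apply: eq_bigr => k _; rewrite !mxE.
under [X in _ = _ * X ^+ 2]eq_bigr do rewrite mxE.
by rewrite expr2; ring.
Qed.

Lemma row_orthogonal (i k : 'I_n) : (row i Q *m (row k Q)^T) 0 0 = (i == k)%:R.
Proof.
have := congr1 (fun M : 'M[R]_n => M i k) QQT; rewrite !mxE => <-.
by apply: eq_bigr => j _; rewrite !mxE.
Qed.

Lemma quad_row_orthogonal_diag (k : 'I_n) :
  (row k Q *m H *m (row k Q)^T) 0 0 = m 0 k.
Proof.
rewrite -[row k Q in X in X *m H]trmxK HE quad_orthogonal_diag (bigD1 k) //=.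
rewrite row_orthogonal eqxx expr1n mulr1 big1 ?addr0 // => i ik.
by rewrite row_orthogonal (negbTE ik) expr0n mulr0.
Qed.

End OrthogonalDiag.

Lemma posdef_orthogonal_diag_gt0 (R : realType) n (Q H : 'M[R]_n) (m : 'rV[R]_n) :
  Q *m Q^T = 1%:M -> H = Q^T *m diag_mx m *m Q -> posdef H -> forall k, 0 < m 0 k.
Proof.
move=> QQT HE H_pd k; have rowN0 : (row k Q)^T != 0.
  apply: contra_neq (oner_neq0 R) => row0.
  move: (row_orthogonal QQT k k).
  by rewrite -[row k Q]trmxK row0 trmx0 mul0mx mxE eqxx.
by have := H_pd _ rowN0; rewrite trmxK (quad_row_orthogonal_diag QQT HE).
Qed.

Section IidExpect.
Context {R : realType} {dX : measure_display} {X : measurableType dX}.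
Variable mu : probability X R.
Local Open Scope ereal_scope.

Lemma probability_integral_cst (c : \bar R) : \int[mu]_x c = c.
Proof. by rewrite integral_cst // -[X in _ * X]/(mu setT) probability_setT mule1. Qed.

Lemma integral_le_cst (g : X -> \bar R) (c : \bar R) :
  0 <= c -> (forall x, 0 <= g x <= c) -> \int[mu]_x g x <= c.
Proof.
move=> c0 gc; rewrite -[leRHS]probability_integral_cst.
(* No measurability of [g] is needed: compare the suprema defining both integrals. *)
rewrite !ge0_integralTE //; last by move=> x; have /andP[] := gc x.
apply: ereal_sup_le => _ [h /= hg <-]; exists h => //= x.
by apply: le_trans (hg x) _; have /andP[] := gc x.
Qed.

Lemma iid_expect_cst N (c : \bar R) : iid_expect mu N (fun=> c) = c.
Proof. by elim: N => //= N ->; exact: probability_integral_cst. Qed.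

Lemma iid_expect_bounded_cat a N (f : seq X -> \bar R) (c : \bar R) : 0 <= c ->
  (forall l, size l = a -> 0 <= iid_expect mu N (fun l' => f (l ++ l')) <= c) ->
  0 <= iid_expect mu (a + N) f <= c.
Proof.
move=> c0; elim: a f => [|a IH] f fc; first exact: (fc [::]).
have fxc x : 0 <= iid_expect mu (a + N) (fun l => f (x :: l)) <= c.
  by apply: IH => l sl; apply: (fc (x :: l)); rewrite /= sl.
apply/andP; split; first by apply: integral_ge0 => x _; have /andP[] := fxc x.
exact: integral_le_cst.
Qed.

Lemma iid_expect_le_prefix a N (f : seq X -> \bar R) (g : seq X -> X -> \bar R)
    (c : \bar R) : 0 <= c ->
  (forall l, size l = a -> forall x l', f (l ++ x :: l') = g l x) ->
  (forall l, size l = a -> 0 <= \int[mu]_x g l x <= c) ->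
  iid_expect mu (a + N.+1) f <= c.
Proof.
move=> c0 fg gc; suff /andP[] : 0 <= iid_expect mu (a + N.+1) f <= c by [].
apply: iid_expect_bounded_cat => // l sl /=.
under eq_integral => x _ do rewrite (funext (fg l sl x)) iid_expect_cst.
exact: gc.
Qed.

End IidExpect.

Lemma expectation_symmetric {R : realType} {dX : measure_display}
    {X : measurableType dX} (mu : {measure set X -> \bar R}) n
    (Hx : X -> 'M[R]_n) (H : 'M[R]_n) :
  (forall x, (Hx x)^T = Hx x) ->
  (forall i j, (\int[mu]_x (Hx x i j)%:E)%E = (H i j)%:E) -> H^T = H.
Proof.
move=> Hx_sym H_mean; apply/matrixP => i j; rewrite mxE; apply/EFin_inj.
by rewrite -!H_mean; apply: eq_integral => x _; rewrite -[in RHS]Hx_sym mxE.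
Qed.

Section NoiseIntegral.
Context {R : realType} {dX : measure_display} {X : measurableType dX}.
Variables (mu : probability X R) (d : nat).
Variables (Hx : X -> 'M[R]_d) (bx : X -> 'cV[R]_d) (H : 'M[R]_d) (b : 'cV[R]_d).
Hypothesis Hx_meas : forall i j, measurable_fun setT (fun x => Hx x i j).
Hypothesis bx_meas : forall i j, measurable_fun setT (fun x => bx x i j).

Lemma measurable_row_noise (r : 'rV[R]_d) (w : 'cV[R]_d) :
  measurable_fun setT (fun x => (r *m noise Hx bx H b w x) 0 0).
Proof.
have -> : (fun x => (r *m noise Hx bx H b w x) 0 0) = (fun x => \sum_i
    (r 0 i * (H *m w - b) i 0 - (\sum_j r 0 i * w j 0 * Hx x i j - r 0 i * bx x i 0))).
  apply/funext => x; rewrite mxE; apply: eq_bigr => i _.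
  rewrite !mxE mulrBr; congr (_ - _); rewrite mulrBr mulr_sumr; congr (_ - _).
  by apply: eq_bigr => j _; ring.
apply: measurable_sum => i; apply: measurable_funB; first exact: measurable_cst.
apply: measurable_funB; last exact: measurable_funM.
by apply: measurable_sum => j; apply: measurable_funM.
Qed.

Lemma integral_noise_quad_le (Q : 'M[R]_d) (m g : 'rV[R]_d) (sigma c : R) w :
  Q *m Q^T = 1%:M -> H = Q^T *m diag_mx m *m Q ->
  (forall v : 'cV[R]_d,
      (\int[mu]_x (((v^T *m noise Hx bx H b w x) 0 0) ^+ 2)%:E
        <= (sigma ^+ 2 * (v^T *m H *m v) 0 0)%:E)%E) ->
  0 <= c -> (forall k, 0 <= g 0 k) ->
  (\int[mu]_x (c * ((noise Hx bx H b w x)^T *m (Q^T *m diag_mx g *m Q)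
       *m noise Hx bx H b w x) 0 0)%:E
   <= (c * sigma ^+ 2 * \sum_k g 0 k * m 0 k)%:E)%E.
Proof.
move=> QQT HE noise_le c0 g0.
have mrn k := measurable_funX 2 (measurable_row_noise (row k Q) w).
under eq_integral do rewrite quad_orthogonal_diag mulr_sumr -sumEFin.
rewrite ge0_integral_sum //; last first.
- by move=> k x _; rewrite lee_fin; apply: mulr_ge0 => //; rewrite mulr_ge0 ?sqr_ge0.
- by move=> k; apply/measurable_EFinP/measurable_funM => //; exact: measurable_funM.
rewrite mulr_sumr -sumEFin; apply: lee_sum => k _.
under eq_integral do rewrite mulrA EFinM.
rewrite ge0_integralZl_EFin ?mulr_ge0 //; last 2 first.
- by move=> x _; rewrite lee_fin sqr_ge0.
- exact/measurable_EFinP.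
have := noise_le (row k Q)^T; rewrite trmxK (quad_row_orthogonal_diag QQT HE) => le_k.
rewrite (_ : c * sigma ^+ 2 * (g 0 k * m 0 k) = c * g 0 k * (sigma ^+ 2 * m 0 k)).
  by apply: le_trans (lee_wpmul2l _ le_k) _; rewrite ?lee_fin ?mulr_ge0 -?EFinM.
by ring.
Qed.

End NoiseIntegral.

Section SgdNoise.
Context {R : realType} {dX : measure_display} {X : measurableType dX}.
Variables (mu : probability X R) (d : nat).
Variables (Hx : X -> 'M[R]_d) (bx : X -> 'cV[R]_d) (H : 'M[R]_d) (b : 'cV[R]_d).
Variables (eta : nat -> R) (T : nat) (w0 : 'cV[R]_d) (sigma : R).
Hypothesis Hx_meas : forall i j, measurable_fun setT (fun x => Hx x i j).
Hypothesis bx_meas : forall i j, measurable_fun setT (fun x => bx x i j).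
Hypothesis noise_bound : forall (l : seq X) (v : 'cV[R]_d),
  (\int[mu]_x (((v^T *m noise Hx bx H b (sgd Hx bx eta 0 w0 l) x) 0 0) ^+ 2)%:E
    <= (sigma ^+ 2 * (v^T *m H *m v) 0 0)%:E)%E.
Variables (Q : 'M[R]_d) (m : 'rV[R]_d).
Hypothesis QQT : Q *m Q^T = 1%:M.
Hypothesis HE : H = Q^T *m diag_mx m *m Q.
Hypothesis m_ge0 : forall k, 0 <= m 0 k.

Lemma sgd_noise_term_le (tau : 'I_T.+1) :
  (iid_expect mu T.+1 (fun l =>
     match drop tau l with
     | x :: _ =>
         let n := noise Hx bx H b (sgd Hx bx eta 0 w0 (take tau l)) x in
         (eta tau ^+ 2 *
           (n^T *m mxprod (fun i => 1%:M - eta i *: H) (rev (iota tau.+1 (T - tau)))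
                *m H *m mxprod (fun i => 1%:M - eta i *: H) (iota tau.+1 (T - tau))
                *m n) 0 0)%:E
     | [::] => 0%E
     end)
   <= (eta tau ^+ 2 * sigma ^+ 2 *
        \sum_k m 0 k ^+ 2 * \prod_(tau.+1 <= i < T.+1) (1 - eta i * m 0 k) ^+ 2)%:E)%E.
Proof.
pose g := \row_k (m 0 k * (\prod_(tau.+1 <= i < T.+1) (1 - eta i * m 0 k)) ^+ 2).
have g_ge0 k : 0 <= g 0 k by rewrite mxE mulr_ge0 ?sqr_ge0.
have gm : \sum_k g 0 k * m 0 k =
    \sum_k m 0 k ^+ 2 * \prod_(tau.+1 <= i < T.+1) (1 - eta i * m 0 k) ^+ 2.
  by apply: eq_bigr => k _; rewrite mxE prodrXl; ring.
rewrite -gm [X in iid_expect _ X](_ : T.+1 = (tau + (T - tau).+1)%N); last first.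
  by rewrite addnS subnKC // -ltnS.
apply: (@iid_expect_le_prefix _ _ _ _ _ _ _ (fun l x => (eta tau ^+ 2 *
    ((noise Hx bx H b (sgd Hx bx eta 0 w0 l) x)^T *m (Q^T *m diag_mx g *m Q)
       *m noise Hx bx H b (sgd Hx bx eta 0 w0 l) x) 0 0)%:E)).
- rewrite lee_fin; apply: mulr_ge0; first by apply: mulr_ge0; exact: sqr_ge0.
  by apply: sumr_ge0 => k _; apply: mulr_ge0.
- move=> l sl x l'; rewrite drop_size_cat // take_size_cat //=.
  by rewrite -(mxprod_sandwich_orthogonal_diag QQT HE) !mulmxA.
- move=> l sl; apply/andP; split; last first.
    by apply: integral_noise_quad_le => //; exact: sqr_ge0.
  apply: integral_ge0 => x _; rewrite lee_fin quad_orthogonal_diag.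
  by rewrite mulr_ge0 ?sqr_ge0 // sumr_ge0 // => k _; rewrite mulr_ge0 ?sqr_ge0.
Qed.

End SgdNoise.

Theorem lemma5 (R : realType) (dX : measure_display) (X : measurableType dX)
  (mu : probability X R) (d : nat)
  (Hx : X -> 'M[R]_d) (bx : X -> 'cV[R]_d) (H : 'M[R]_d) (b : 'cV[R]_d)
  (eta : nat -> R) (T : nat) (w0 : 'cV[R]_d) (sigma : R)
  (lambda : 'I_d -> R)
  (Hx_meas : forall i j, measurable_fun setT (fun x => Hx x i j))
  (bx_meas : forall i j, measurable_fun setT (fun x => bx x i j))
  (Hx_sym : forall x, (Hx x)^T = Hx x)
  (Hx_int : forall i j, mu.-integrable setT (fun x => (Hx x i j)%:E))
  (bx_int : forall i j, mu.-integrable setT (fun x => (bx x i j)%:E))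
  (H_mean : forall i j, (\int[mu]_x (Hx x i j)%:E)%E = (H i j)%:E)
  (b_mean : forall i j, (\int[mu]_x (bx x i j)%:E)%E = (b i j)%:E)
  (H_pd : posdef H)
  (noise_bound : forall (l : seq X) (v : 'cV[R]_d),
      (\int[mu]_x (((v^T *m noise Hx bx H b (sgd Hx bx eta 0 w0 l) x) 0 0) ^+ 2)%:E
        <= (sigma ^+ 2 * (v^T *m H *m v) 0 0)%:E)%E)
  (lambda_eig : char_poly H = \prod_(j < d) ('X - (lambda j)%:P)) :
  let P := fun i : nat => 1%:M - eta i *: H in
  (\sum_(tau < T.+1)
     iid_expect mu T.+1 (fun l =>
       match drop tau l with
       | x :: _ =>
           let n := noise Hx bx H b (sgd Hx bx eta 0 w0 (take tau l)) x in
           (eta tau ^+ 2 *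
             (n^T *m mxprod P (rev (iota tau.+1 (T - tau))) *m H
                  *m mxprod P (iota tau.+1 (T - tau)) *m n) 0 0)%:E
       | [::] => 0%E
       end)
   <= (sigma ^+ 2 * \sum_(j < d) (lambda j) ^+ 2 *
        \sum_(k < T.+1) (eta k ^+ 2 *
           \prod_(k.+1 <= i < T.+1) (1 - eta i * lambda j) ^+ 2))%:E)%E.
Proof.
cbv zeta; have HT := expectation_symmetric Hx_sym H_mean.
have [Q [m [QQT HE]]] := symmetric_orthogonal_diag HT lambda_eig.
have m_ge0 k := ltW (posdef_orthogonal_diag_gt0 QQT HE H_pd k).
have eig_m : \prod_(k < d) ('X - (m 0 k)%:P) = \prod_(j < d) ('X - (lambda j)%:P).
  by rewrite -(char_poly_orthogonal_diag QQT HE).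
rewrite -(eq_sum_of_prod_XsubC (fun x => x ^+ 2 * \sum_(k < T.+1) (eta k ^+ 2 *
    \prod_(k.+1 <= i < T.+1) (1 - eta i * x) ^+ 2)) eig_m).
have sum_bounds : \sum_(tau < T.+1) (eta tau ^+ 2 * sigma ^+ 2 *
    \sum_k m 0 k ^+ 2 * \prod_(tau.+1 <= i < T.+1) (1 - eta i * m 0 k) ^+ 2) =
  sigma ^+ 2 * \sum_k m 0 k ^+ 2 *
    \sum_(tau < T.+1)
      (eta tau ^+ 2 * \prod_(tau.+1 <= i < T.+1) (1 - eta i * m 0 k) ^+ 2).
  under eq_bigr do rewrite mulr_sumr.
  rewrite exchange_big mulr_sumr; apply: eq_bigr => k _ /=.
  by rewrite !mulr_sumr; apply: eq_bigr => tau _; ring.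
rewrite -sum_bounds -sumEFin; apply: lee_sum => tau _.
exact (sgd_noise_term_le Hx_meas bx_meas noise_bound QQT HE m_ge0 tau).
Qed.
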